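(* Let $K$ be the fractal percolation on $[0,1]$ with parameters $M\in\mathbb{N}_{\geq2}$ and $p\in(0,1]$, $D=\log(Mp)/\log M$, $r=1/M$, and $\overline{\mathcal V}_k(K):=\lim_{n\to\infty}r^{n(D-k)}\mathbb{E}V_k(K_n)$ for $k=0,1$. Then these limits exist and $$\overline{\mathcal V}_1(K)=1,\qquad \overline{\mathcal V}_0(K)=\frac{M(1-p)}{M-p}.$$
   Context: Fractal percolation on $[0,1]$: $K_0=[0,1]$; given $K_{n-1}$, a union of closed grid intervals of length $M^{-(n-1)}$, each is divided into $M$ closed subintervals of length $M^{-n}$, each kept independently (of everything else) with probability $p$; $K_n$ is the union of kept subintervals. $V_1$ is length and $V_0$ the number of connected components. *)

From HB Require Import structures.
From mathcomp Require Import all_boot all_order all_algebra.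
From mathcomp Require Import finmap all_classical all_reals all_analysis.
Set Implicit Arguments. Unset Strict Implicit. Unset Printing Implicit Defensive.
Import Order.TTheory GRing.Theory Num.Theory numFieldNormedType.Exports.
Local Open Scope classical_set_scope.
Local Open Scope ring_scope.

(* Sample space for the first n levels of fractal percolation on [0,1]:
   one coin for every grid interval of level j+1 (j < n), i.e. for every
   index i < M^(j+1) (the interval [i/M^(j+1), (i+1)/M^(j+1)]). *)
Definition Omega (M n : nat) := {dffun forall j : 'I_n, {ffun 'I_(M ^ j.+1) -> bool}}.

(* coin w j i = the coin of interval i at level j+1 (false if out of range) *)
Definition coin (M n : nat) (w : Omega M n) (j i : nat) : bool :=
  match insub j with
  | Some jj => match insub i with Some ii => w jj ii | None => false end
  | None => false
  end.

Definition weight {R : realType} (M n : nat) (p : R) (w : Omega M n) : R :=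
  \prod_(j : 'I_n) \prod_(i : 'I_(M ^ j.+1)) (if w j i then p else 1 - p).

Definition Expect {R : realType} (M n : nat) (p : R) (f : Omega M n -> R) : R :=
  \sum_(w : Omega M n) weight p w * f w.

(* The level-n interval with index i (i < M^n) belongs to K_n iff it and all
   its ancestors (at levels 1..n) were kept. *)
Definition kept (M n : nat) (w : Omega M n) (i : nat) : bool :=
  [forall j : 'I_n, coin w j (i %/ M ^ (n - j.+1))].

Definition Kn {R : realType} (M n : nat) (w : Omega M n) : set R :=
  \bigcup_(i in [set i : nat | (i < M ^ n)%N /\ kept w i])
     `[(i%:R / (M ^ n)%:R : R), i.+1%:R / (M ^ n)%:R]%classic.

Definition V1 {R : realType} (A : set R) : R := fine (lebesgue_measure A).

(* V_0 = number of connected components (sets here are finite unions of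
   closed intervals, so the set of components is finite) *)
Definition V0 {R : realType} (A : set R) : R :=
  (#|` fset_set [set connected_component A x | x in A]|)%fset%:R.

From HB Require Import structures.
From mathcomp Require Import all_boot all_order all_algebra.
From mathcomp Require Import finmap all_classical all_reals all_analysis.
From mathcomp Require Import ring lra.
Set Implicit Arguments.
Unset Strict Implicit.
Unset Printing Implicit Defensive.
Import Order.TTheory GRing.Theory Num.Theory numFieldNormedType.Exports.
Local Open Scope classical_set_scope.
Local Open Scope ring_scope.

(* The expectations are explicit at every level n.  K_n is the union of the kept
   cells of the grid of mesh M^-n, so V_1(K_n) = #kept / M^n, and since the
   components of K_n are the maximal runs of kept cells,
   V_0(K_n) = #kept - #(adjacent kept pairs).  A cell is kept iff all its n
   ancestors are, so by independence E[kept i] = p^n and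
   E[kept i /\ kept (i+1)] = p^(n + m), where m counts the levels at which the
   ancestors of i and i+1 differ, i.e. at which i+1 is a grid point.  Summing over
   i digit by digit in base M gives E V_1(K_n) = p^n and
   (M - p) E V_0(K_n) = M(1-p) (Mp)^n + (M-1) p p^(2n).  As r^(D-1) = 1/p and
   r^D = 1/(Mp), the rescaled sequences are 1 and
   M(1-p)/(M-p) + O((p/M)^n). *)

Section CoinConfigurations.
Variables (R : comPzSemiRingType) (J : finType) (I_ : J -> finType).

Lemma sum_prod_coins (g : forall j, I_ j -> bool -> R) :
  \sum_(w : {dffun forall j, {ffun I_ j -> bool}}) \prod_j \prod_(i : I_ j) g j i (w j i) =
  \prod_j \prod_(i : I_ j) (g j i true + g j i false).
Proof.
pose flat (f : {ffun {j : J & I_ j} -> bool}) : {dffun forall j, {ffun I_ j -> bool}} :=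
  [ffun j => [ffun i => f (Tagged I_ i)]].
pose unflat (w : {dffun forall j, {ffun I_ j -> bool}}) := [ffun s => w (tag s) (tagged s)].
have flatK : cancel flat unflat by move=> f; apply/ffunP => -[j i]; rewrite !ffunE.
have unflatK : cancel unflat flat.
  by move=> w; apply/ffunP => j; apply/ffunP => i; rewrite !ffunE.
rewrite (reindex flat); last by apply: onW_bij; exists unflat.
transitivity (\prod_(s : {j : J & I_ j}) \sum_(b : bool) g (tag s) (tagged s) b).
  rewrite bigA_distr_bigA; apply: eq_bigr => f _.
  by rewrite sig_big_dep; apply: eq_bigr => -[j i] _; rewrite !ffunE.
by rewrite sig_big_dep; apply: eq_bigr => -[j i] _; rewrite big_bool.
Qed.
End CoinConfigurations.

Lemma prodr_natb (R : pzSemiRingType) (I : finType) (B : pred I) :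
  \prod_i (B i)%:R = [forall i, B i]%:R :> R.
Proof.
rewrite -[[forall i, B i]]/[forall (i | true), B i] -big_andE.
by apply/esym/(big_morph (fun b : bool => b%:R : R)) => // a b; rewrite -natrM mulnb.
Qed.

Section Expectation.
Variables (R : realType) (M n : nat) (p : R).

Lemma Expect_sum (I : Type) (r : seq I) (F : I -> Omega M n -> R) :
  Expect p (fun w => \sum_(i <- r) F i w) = \sum_(i <- r) Expect p (F i).
Proof. by rewrite /Expect exchange_big; apply: eq_bigr => w _; rewrite big_distrr. Qed.

Lemma ExpectMr (f : Omega M n -> R) c : Expect p (fun w => f w * c) = Expect p f * c.
Proof. by rewrite /Expect big_distrl; apply: eq_bigr => w _; rewrite mulrA. Qed.

Lemma ExpectB (f g : Omega M n -> R) :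
  Expect p (fun w => f w - g w) = Expect p f - Expect p g.
Proof. by rewrite /Expect -sumrB; apply: eq_bigr => w _; rewrite mulrBr. Qed.

Lemma Expect_all_coins (S : forall j : 'I_n, {set 'I_(M ^ j.+1)}) :
  Expect p (fun w => [forall j, [forall i in S j, w j i]]%:R) = \prod_j p ^+ #|S j|.
Proof.
rewrite /Expect /weight.
under [LHS]eq_bigr => w _.
  rewrite -prodr_natb -big_split /=.
  under eq_bigr => j _ do rewrite -(prodr_natb _ (fun i => (i \in S j) ==> w j i)) -big_split /=.
  over.
rewrite (sum_prod_coins (fun j i b => (if b then p else 1 - p) * ((i \in S j) ==> b)%:R)) /=.
apply: eq_bigr => j _; rewrite -prodr_const [RHS]big_mkcond /=.
by apply: eq_bigr => i _; case: (i \in S j); rewrite /= ?mulr1 ?mulr0 ?addr0 // addrC subrK.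
Qed.

Lemma ancestor_subproof (i : 'I_(M ^ n)) (j : 'I_n) : (i %/ M ^ (n - j.+1) < M ^ j.+1)%N.
Proof.
have iM : (i < M ^ (n - j.+1) * M ^ j.+1)%N by rewrite -expnD subnK //; exact: ltn_ord.
have d_gt0 : (0 < M ^ (n - j.+1))%N by move: iM; case: posnP => // ->.
by rewrite ltn_divLR // mulnC.
Qed.

Definition ancestor (i : 'I_(M ^ n)) (j : 'I_n) : 'I_(M ^ j.+1) :=
  Ordinal (ancestor_subproof i j).

Lemma keptE (w : Omega M n) (i : 'I_(M ^ n)) : kept w i = [forall j, w j (ancestor i j)].
Proof.
apply: eq_forallb => j; rewrite /coin.
case: insubP => [jj _ /val_inj ->|]; last by rewrite ltn_ord.
case: insubP => [ii _ Eii|]; last by rewrite ancestor_subproof.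
by congr (w j _); exact: val_inj.
Qed.

Lemma Expect_kept_pair (i i' : 'I_(M ^ n)) :
  Expect p (fun w : Omega M n => (kept w i && kept w i')%:R) =
  \prod_j p ^+ (ancestor i j != ancestor i' j).+1.
Proof.
under eq_bigr do rewrite -cards2.
rewrite -Expect_all_coins /Expect; apply: eq_bigr => w _; congr (_ * (nat_of_bool _)%:R).
rewrite !keptE; apply/idP/forallP => [/andP[/forallP Hi /forallP Hi'] j|H].
  by apply/forall_inP => a; rewrite !inE => /orP[]/eqP->.
by apply/andP; split; apply/forallP => j; apply: (forall_inP (H j)); rewrite !inE eqxx ?orbT.
Qed.

Lemma Expect_kept (i : 'I_(M ^ n)) : Expect p (fun w : Omega M n => (kept w i)%:R) = p ^+ n.
Proof.
under eq_fun do rewrite -[kept _ _]andbb.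
by rewrite Expect_kept_pair; under eq_bigr do rewrite eqxx; rewrite prodr_const card_ord.
Qed.

End Expectation.

Section BoundaryWeight.
Variables (R : comPzRingType) (M : nat) (p : R).
Hypothesis M_gt0 : (0 < M)%N.

(* p to the number of levels j < n at which t / M^n is an endpoint of a grid
   interval of level j+1 *)
Definition boundary_weight (n t : nat) : R :=
  \prod_(j < n) (if (M ^ (n - j.+1) %| t)%N then p else 1).

Lemma boundary_weight0 n : boundary_weight n 0 = p ^+ n.
Proof.
by rewrite /boundary_weight; under eq_bigr do rewrite dvdn0; rewrite prodr_const card_ord.
Qed.

Lemma boundary_weight_digit n q r : (r < M)%N ->
  boundary_weight n.+1 (q * M + r)%N = (if r == 0%N then boundary_weight n q else 1) * p.
Proof.
move=> r_lt; rewrite /boundary_weight big_ord_recr /= subnn expn0 dvd1n; congr (_ * _).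
have dvdE (j : 'I_n) : (M ^ (n.+1 - j.+1) %| q * M + r)%N = (r == 0%N) && (M ^ (n - j.+1) %| q)%N.
  rewrite subSn ?ltn_ord //; case: (eqVneq r 0%N) => [->|r_neq0] /=.
    by rewrite addn0 expnSr dvdn_pmul2r.
  apply/negP => /(dvdn_trans (dvdn_exp2l M (ltn0Sn (n - j.+1)))).
  rewrite expn1 dvdn_addr ?dvdn_mull // => /dvdn_leq.
  by rewrite lt0n r_neq0 leqNgt r_lt => /(_ isT).
case: (eqVneq r 0%N) => [r0|r_neq0].
  by apply: eq_bigr => j _; rewrite dvdE r0.
by rewrite big1 // => j _; rewrite dvdE (negbTE r_neq0).
Qed.

Lemma sum_boundary_weightS n :
  \sum_(t < M ^ n.+1) boundary_weight n.+1 t =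
  p * \sum_(t < M ^ n) boundary_weight n t + (M.-1 * M ^ n)%N%:R * p.
Proof.
have -> : (M.-1 * M ^ n)%N%:R * p = \sum_(0 <= q < M ^ n) (M.-1%:R * p) :> R.
  by rewrite sumr_const_nat subn0 -[RHS]mulr_natr natrM; ring.
rewrite -(big_mkord xpredT (boundary_weight n.+1)) -(big_mkord xpredT (boundary_weight n)).
rewrite expnSr big_nat_mul big_distrr -big_split /=.
apply: eq_big_nat => q _.
rewrite -{1}(add0n (q * M)%N) big_addn mulSn addnK big_ltn //.
rewrite add0n -{1}[(q * M)%N]addn0 boundary_weight_digit // eqxx mulrC; congr (_ + _).
rewrite (eq_big_nat _ _ (F2 := fun=> p)) => [|r /andP[r_gt0 r_lt]].
  by rewrite sumr_const_nat subn1 mulr_natl.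
by rewrite addnC boundary_weight_digit // eqn0Ngt r_gt0 mul1r.
Qed.

Lemma sum_boundary_weight n :
  (M%:R - p) * \sum_(t < M ^ n) boundary_weight n t =
  (M%:R - 1) * p * M%:R ^+ n + M%:R * (1 - p) * p ^+ n.
Proof.
elim: n => [|n IH]; first by rewrite expn0 big_ord1 boundary_weight0 !expr0; ring.
rewrite sum_boundary_weightS mulrDr mulrCA IH natrM natrX -subn1 natrB // !exprS.
ring.
Qed.

End BoundaryWeight.

Section GridUnion.
Variables (R : realType) (N : nat) (kb : nat -> bool).
Hypothesis N_gt0 : (0 < N)%N.

Definition grid_point (i : nat) : R := i%:R / N%:R.

Definition grid_union : set R :=
  \bigcup_(i in [set i | (i < N)%N /\ kb i]) `[grid_point i, grid_point i.+1]%classic.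

Definition grid_kept (i : nat) := (i < N)%N && kb i.

Let N_gtr0 : 0 < (N%:R : R). Proof. by rewrite ltr0n. Qed.

Lemma ler_grid_point i j : (grid_point i <= grid_point j) = (i <= j)%N.
Proof. by rewrite ler_pM2r ?invr_gt0 // ler_nat. Qed.

Lemma ltr_grid_point i j : (grid_point i < grid_point j) = (i < j)%N.
Proof. by rewrite ltr_pM2r ?invr_gt0 // ltr_nat. Qed.

Lemma grid_unionP x :
  grid_union x <-> exists2 i, grid_kept i & grid_point i <= x <= grid_point i.+1.
Proof.
split; first by case=> i [iN ki]; rewrite /= in_itv /= => hx; exists i; rewrite ?/grid_kept ?iN.
by case=> i /andP[iN ki] hx; exists i => //; rewrite /= in_itv.
Qed.

Lemma grid_point_in_union i : grid_kept i -> grid_union (grid_point i).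
Proof. by move=> ki; apply/grid_unionP; exists i => //; rewrite lexx ler_grid_point leqnSn. Qed.

Let cell i : set R := if kb i then `[grid_point i, grid_point i.+1[%classic else set0.

Let right_ends : set R :=
  \bigcup_(i in [set i | (i < N)%N /\ kb i]) [set grid_point i.+1].

Let grid_union_cells : grid_union = (\big[setU/set0]_(i < N) cell i) `|` right_ends.
Proof.
rewrite -bigcup_mkord; apply/seteqP; split => x.
  case/grid_unionP => i /andP[iN ki] /andP[h1 h2].
  case: (ltrP x (grid_point i.+1)) => h3.
    by left; exists i => //; rewrite /cell ki /= in_itv /= h1 h3.
  by right; exists i => //; apply/eqP; rewrite eq_le h2 h3.
case=> [[i /= iN]|[i [iN ki] ->]]; last first.
  by apply/grid_unionP; exists i; [rewrite /grid_kept iN | rewrite lexx andbT ler_grid_point].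
rewrite /cell; case: ifP => ki //=; rewrite in_itv /= => /andP[h1 h2].
by apply/grid_unionP; exists i; rewrite ?/grid_kept ?iN ?h1 ?ltW.
Qed.

Let cells_trivIset : trivIset setT cell.
Proof.
move=> i j _ _ [x []]; rewrite /cell.
case: (kb i) => //; case: (kb j) => //=; rewrite !in_itv /= => /andP[h1 h2] /andP[h3 h4].
have : (i < j.+1)%N by rewrite -ltr_grid_point; apply: le_lt_trans h4.
have : (j < i.+1)%N by rewrite -ltr_grid_point; apply: le_lt_trans h2.
by rewrite !ltnS => hji hij; apply/eqP; rewrite eqn_leq hij hji.
Qed.

Lemma V1_grid_union : V1 grid_union = (\sum_(i < N) (kb i)%:R) / N%:R.
Proof.
have cell_meas i : measurable (cell i) by rewrite /cell; case: ifP.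
have right_ends0 : lebesgue_measure right_ends = 0%E.
  by apply: countable_lebesgue_measure0; apply: bigcup_countable.
rewrite /V1 grid_union_cells measureU0 //; first last.
- by apply: bigcup_measurable => i _; exact: measurable_set1.
- by apply: bigsetU_measurable => i _; exact: cell_meas.
rewrite (measure_bigsetU (@lebesgue_measure R) cell_meas cells_trivIset).
have -> : \sum_(i < N) lebesgue_measure (cell i) = \sum_(i < N) ((kb i)%:R / N%:R)%:E.
  apply: eq_bigr => i _; rewrite /cell; case: (kb i); last by rewrite measure0 mul0r.
  rewrite lebesgue_measure_itv /= lte_fin ltr_grid_point ltnSn /= -EFinD.
  by rewrite -mulrBl -natrB // subSnn.
by rewrite sumEFin /= mulr_suml.
Qed.

Definition grid_run_start (s : nat) := grid_kept s && ((s == 0)%N || ~~ grid_kept s.-1).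

Lemma exists_grid_run_start l : grid_kept l ->
  exists s, [/\ grid_run_start s, (s <= l)%N & forall t, (s <= t <= l)%N -> grid_kept t].
Proof.
elim: l => [|l IH] kl.
  by exists 0%N; split; rewrite /grid_run_start ?kl // => t; rewrite leqn0 => /eqP ->.
case kl': (grid_kept l); last first.
  by exists l.+1; split; rewrite /grid_run_start ?kl ?kl' // => t; rewrite -eqn_leq => /eqP <-.
have [s [ss sl st]] := IH kl'; exists s; split; [done | exact: leqW|].
move=> t /andP[h1 h2]; case: (ltngtP t l.+1) h2 => //; last by move=> ->.
by rewrite ltnS => h3 _; apply: st; rewrite h1 h3.
Qed.

Lemma run_sub_grid_union s d : (forall t, (s <= t <= s + d)%N -> grid_kept t) ->
  `[grid_point s, grid_point (s + d).+1]%classic `<=` grid_union.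
Proof.
elim: d => [|d IH] H x; rewrite /= in_itv /= => /andP[h1 h2].
  apply/grid_unionP; exists s; first by apply: H; rewrite addn0 leqnn.
  by rewrite addn0 in h2; rewrite h1.
case: (lerP x (grid_point (s + d).+1)) => h3.
  apply: IH; last by rewrite /= in_itv /= h1 h3.
  by move=> t /andP[t1 t2]; apply: H; rewrite t1 addnS (leq_trans t2).
apply/grid_unionP; exists (s + d).+1; last by rewrite (ltW h3) -addnS.
by apply: H; rewrite addnS leqnn andbT (leq_trans (leq_addr d s)).
Qed.

Lemma midpoint_notin_grid_union t : ~~ grid_kept t ->
  ~ grid_union ((grid_point t + grid_point t.+1) / 2).
Proof.
move=> kt /grid_unionP [i ki /andP[h1 h2]].
have lt1 : grid_point t < grid_point t.+1 by rewrite ltr_grid_point.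
have : grid_point i < grid_point t.+1 by apply: le_lt_trans h1 _; lra.
have : grid_point t < grid_point i.+1 by apply: lt_le_trans h2; lra.
rewrite !ltr_grid_point !ltnS => h3 h4.
by move: kt; rewrite (_ : t = i) ?ki //; apply/eqP; rewrite eqn_leq h3 h4.
Qed.

Lemma component_run_start x : grid_union x -> exists2 s, grid_run_start s &
  connected_component grid_union x = connected_component grid_union (grid_point s).
Proof.
move=> /grid_unionP [l kl /andP[h1 h2]].
have [s [ss sl st]] := exists_grid_run_start kl.
exists s => //; apply: same_connected_component.
have sub : `[grid_point s, grid_point l.+1]%classic `<=` grid_union.
  by rewrite -(subnKC sl); apply: run_sub_grid_union; rewrite subnKC.
have itv_conn : connected `[grid_point s, grid_point l.+1]%classic.
  by apply/connected_intervalP; exact: interval_is_interval.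
apply: (connected_component_max _ sub itv_conn).
  by rewrite /= in_itv /= h2 andbT; apply: le_trans h1; rewrite ler_grid_point.
by rewrite /= in_itv /= lexx /= ler_grid_point // leqW.
Qed.

Lemma run_start_component_inj s s' : grid_run_start s -> grid_run_start s' ->
  connected_component grid_union (grid_point s) =
  connected_component grid_union (grid_point s') -> s = s'.
Proof.
wlog ss' : s s' / (s < s')%N.
  move=> W h h' E; case: (ltngtP s s') => // H; [exact: W | exact/esym/W].
move=> /andP[ks _] /andP[ks' /orP[/eqP s'0|ns']] E; first by rewrite s'0 in ss'.
(* the midpoint of the missing cell s'.-1 would lie in the component of s *)
exfalso; apply: (midpoint_notin_grid_union ns').
apply: (connected_component_sub (x := grid_point s)).
have /connected_intervalP := @component_connected _ grid_union (grid_point s); apply.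
- exact/connected_component_refl/grid_point_in_union.
- by rewrite E; exact/connected_component_refl/grid_point_in_union.
have e : s'.-1.+1 = s' by rewrite prednK // (leq_ltn_trans (leq0n s)).
have lt1 : grid_point s'.-1 < grid_point s'.-1.+1 by rewrite ltr_grid_point.
have le1 : grid_point s <= grid_point s'.-1 by rewrite ler_grid_point -ltnS e.
rewrite -e; apply/andP; split; lra.
Qed.

Lemma V0_grid_union_count : V0 grid_union = (count grid_run_start (iota 0 N))%:R.
Proof.
pose S : {fset nat} := seq_fset tt (seq.filter grid_run_start (iota 0 N)).
have startsE : [set connected_component grid_union x | x in grid_union] =
    (fun s => connected_component grid_union (grid_point s)) @` [set` S].
  apply/seteqP; split => C.
    case=> x Ux <-; have [s ss ->] := component_run_start Ux.
    exists s => //; rewrite /= seq_fsetE mem_filter mem_iota /= add0n ss.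
    by case/andP: ss => /andP[].
  case=> s; rewrite /= seq_fsetE mem_filter mem_iota => /andP[/andP[ks _] _] <-.
  by exists (grid_point s) => //; exact: grid_point_in_union.
rewrite /V0 startsE fset_set_image ?finite_fset // set_fsetK.
have /eqP -> :
    (#|` [fset connected_component grid_union (grid_point s) | s in S]%fset| == #|` S|)%N.
  apply/card_in_imfsetP => x y; rewrite !seq_fsetE !mem_filter => /andP[hx _] /andP[hy _].
  exact: run_start_component_inj.
by rewrite (size_seq_fset tt) undup_id ?filter_uniq ?iota_uniq // size_filter.
Qed.

Lemma V0_grid_union :
  V0 grid_union = \sum_(i < N) (kb i)%:R - \sum_(i < N.-1) (kb i && kb i.+1)%:R.
Proof.
rewrite V0_grid_union_count -sum1_count natr_sum big_mkcond /=.
rewrite -{1}(subn0 N) -/(index_iota 0 N) big_mkord.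
have startE (i : 'I_N) : (if grid_run_start i then 1 else 0) =
    (kb i)%:R - ((i != 0%N :> nat) && kb i.-1 && kb i)%:R :> R.
  rewrite /grid_run_start /grid_kept ltn_ord /=.
  case: (eqVneq (val i) 0%N) => [->|nz] /=; first by case: (kb 0); rewrite subr0.
  rewrite (leq_ltn_trans (leq_pred _)) //.
  by case: (kb i); case: (kb i.-1); rewrite /= ?subr0 ?subrr.
rewrite (eq_bigr _ (fun i _ => startE i)).
rewrite sumrB; congr (_ - _); case: N N_gt0 => // m _ /=.
by rewrite big_ord_recl /= add0r.
Qed.

End GridUnion.

Section PercolationExpectations.
Variables (R : realType) (M n : nat) (p : R).
Hypothesis M_gt0 : (0 < M)%N.

Let Mn_gt0 : (0 < M ^ n)%N. Proof. by rewrite expn_gt0 M_gt0. Qed.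

Lemma Expect_kept_succ (i : 'I_(M ^ n).-1) :
  Expect p (fun w : Omega M n => (kept w i && kept w i.+1)%:R) =
  p ^+ n * boundary_weight M p n i.+1.
Proof.
have i1_lt : (i.+1 < M ^ n)%N by rewrite -ltn_predRL.
rewrite (Expect_kept_pair p (Ordinal (ltnW i1_lt)) (Ordinal i1_lt)).
rewrite /boundary_weight -[in p ^+ n](card_ord n) -prodr_const -big_split /=.
apply: eq_bigr => j _; rewrite -(inj_eq val_inj) /=.
have d_gt0 : (0 < M ^ (n - j.+1))%N by rewrite expn_gt0 M_gt0.
rewrite (divnS _ d_gt0); case: (_ %| _)%N => /=.
  by rewrite add1n neq_ltn ltnSn expr2.
by rewrite add0n eqxx expr1 mulr1.
Qed.

Lemma Expect_V1 : Expect p (fun w : Omega M n => V1 (Kn w)) = p ^+ n.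
Proof.
rewrite (eq_fun (fun w : Omega M n => V1_grid_union R (kept w) Mn_gt0)) ExpectMr Expect_sum.
under eq_bigr => i _ do rewrite Expect_kept.
by rewrite sumr_const card_ord -(mulr_natr (p ^+ n)) mulfK // pnatr_eq0 -lt0n.
Qed.

Lemma Expect_V0 :
  (M%:R - p) * Expect p (fun w : Omega M n => V0 (Kn w)) =
  M%:R * (1 - p) * (M%:R * p) ^+ n + (M%:R - 1) * p * (p ^+ n * p ^+ n).
Proof.
rewrite (eq_fun (fun w : Omega M n => V0_grid_union R (kept w) Mn_gt0)) ExpectB !Expect_sum.
under eq_bigr => i _ do rewrite Expect_kept.
rewrite (eq_bigr _ (fun i _ => Expect_kept_succ i)) -big_distrr /=.
have -> : \sum_(i < (M ^ n).-1) boundary_weight M p n i.+1 =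
    \sum_(t < M ^ n) boundary_weight M p n t - p ^+ n.
  case: (M ^ n)%N Mn_gt0 => // m _ /=.
  by rewrite big_ord_recl boundary_weight0 [p ^+ n + _]addrC addrK.
have := sum_boundary_weight p M_gt0 n.
set G := \sum_(t < _) boundary_weight _ _ _ _ => G_closed.
rewrite sumr_const card_ord -(mulr_natr (p ^+ n)) natrX.
have -> : forall x, (M%:R - p) * (p ^+ n * x - p ^+ n * (G - p ^+ n)) =
    (M%:R - p) * p ^+ n * x - p ^+ n * ((M%:R - p) * G) + (M%:R - p) * p ^+ n * p ^+ n.
  by move=> x; ring.
by rewrite G_closed exprMn; ring.
Qed.

End PercolationExpectations.

Lemma powR_invr_ln (R : realType) (b y : R) : 1 < b -> 0 < y -> b^-1 `^ (ln y / ln b) = y^-1.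
Proof.
move=> b_gt1 y_gt0; have b_gt0 : 0 < b := lt_trans ltr01 b_gt1.
rewrite /powR invr_eq0 gt_eqF // lnV ?posrE // mulrN divfK ?gt_eqF ?ln_gt0 //.
by rewrite expRN lnK.
Qed.

Lemma cvg_geometric_offset (R : realType) (a b q : R) :
  `|q| < 1 -> (fun n => a + b * q ^+ n) @ \oo --> a.
Proof.
move=> q_lt1; rewrite -[X in _ --> X]addr0; apply: cvgD; first exact: cvg_cst.
by rewrite -(mulr0 b); apply: cvgM; [exact: cvg_cst | exact: cvg_expr].
Qed.

Theorem corollary4p3 (R : realType) (M : nat) (p : R) :
  (2 <= M)%N -> 0 < p <= 1 ->
  let D := ln (M%:R * p) / ln (M%:R : R) in
  let r := (M%:R : R)^-1 in
  (fun n : nat => r `^ (n%:R * (D - 1)) * Expect p (fun w : Omega M n => V1 (Kn w)))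
     @ \oo --> (1 : R) /\
  (fun n : nat => r `^ (n%:R * (D - 0)) * Expect p (fun w : Omega M n => V0 (Kn w)))
     @ \oo --> (M%:R * (1 - p) / (M%:R - p) : R).
Proof.
move=> M_ge2 /andP[p_gt0 p_le1] D r.
have M_gt0 : (0 < M)%N by exact: leq_trans M_ge2.
have M_gt1 : 1 < M%:R :> R by rewrite ltr1n.
have M_gtr0 : 0 < M%:R :> R by rewrite ltr0n.
have Mp_neq0 : M%:R - p != 0 by rewrite subr_eq0 gt_eqF // (le_lt_trans p_le1).
have r_pow y n : 0 < y -> r `^ (n%:R * (ln y / ln M%:R)) = (y ^+ n)^-1.
  by move=> y_gt0; rewrite mulrC powRrM powR_invr_ln // powR_mulrn ?exprVn // invr_ge0 ltW.
have D1 : D - 1 = ln p / ln M%:R.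
  have lnM_neq0 : ln M%:R != 0 :> R by rewrite gt_eqF // ln_gt0.
  by rewrite /D lnM ?posrE  //; field.
split.
  under eq_fun do rewrite D1 r_pow // Expect_V1 // mulVf ?expf_neq0 ?gt_eqF //.
  exact: cvg_cst.
suff -> : (fun n => r `^ (n%:R * (D - 0)) * Expect p (fun w : Omega M n => V0 (Kn w))) =
    (fun n => M%:R * (1 - p) / (M%:R - p) + (M%:R - 1) * p / (M%:R - p) * (p / M%:R) ^+ n).
  apply: cvg_geometric_offset.
  by rewrite ger0_norm ?divr_ge0 ?ltW // ltr_pdivrMr // mul1r (le_lt_trans p_le1).
apply/funext => n; rewrite subr0 r_pow ?mulr_gt0  //.
rewrite -[Expect _ _](mulKf Mp_neq0) Expect_V0 // exprMn expr_div_n.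
by field; rewrite Mp_neq0 !expf_neq0 ?gt_eqF.
Qed.
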